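(* Let $n\ge 2$ and let $F(x)=\frac{1}{1+\exp(-x)}$ be the logistic cumulative distribution function. Let $D=(D_{i,j,k})$, $i,j\in\{1,\dots,n\}$, $k\in\{1,2\}$, be nonnegative real data with $D_{i,j,1}=D_{j,i,2}$ for all $i,j$. Let $I$ be a set of ordered pairs $(i,j)$ with $i\neq j$ such that $(i,j)\in I$ if and only if $(j,i)\in I$, and such that $D_{i,j,1}>0$ and $D_{i,j,2}>0$ for all $(i,j)\in I$. Suppose the undirected graph $G_I$ on vertex set $\{1,\dots,n\}$ with an edge $\{i,j\}$ whenever $(i,j)\in I$ is connected. For $(i,j)\in I$ put $h_{i,j}=D_{i,j,2}/D_{i,j,1}$. Then the following are equivalent: (a) for every cycle $(i_1,i_2,\dots,i_k,i_1)$ in $G_I$ (i.e. $(i_l,i_{l+1})\in I$ for $l=1,\dots,k-1$ and $(i_k,i_1)\in I$) one has $h_{i_1,i_2}\cdot h_{i_2,i_3}\cdots h_{i_{k-1},i_k}\cdot h_{i_k,i_1}=1$; (b) there exists $\underline{m}^{(0)}=(0,m_2^{(0)},\dots,m_n^{(0)})\in\mathbb{R}^n$ such that $$\frac{D_{i,j,2}}{D_{i,j,1}}=\frac{F\big(m_i^{(0)}-m_j^{(0)}\big)}{F\big(m_j^{(0)}-m_i^{(0)}\big)}\quad\text{for all }(i,j)\in I.$$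
   Context: In the Bradley–Terry paired comparison model, $D_{i,j,1}$ is the number (or weight) of comparisons with outcome ''$i$ is worse than $j$'' and $D_{i,j,2}$ the number with outcome ''$i$ is better than $j$'', so $D_{i,j,1}=D_{j,i,2}$. The data matrix $D$ is called consistent in $I$ when condition (a) holds. *)

From HB Require Import structures.
From mathcomp Require Import all_boot all_order all_algebra.
From mathcomp Require Import reals.
From mathcomp Require Import sequences.
Set Implicit Arguments. Unset Strict Implicit. Unset Printing Implicit Defensive.
Import Order.TTheory GRing.Theory Num.Theory.
Local Open Scope ring_scope.

Definition logisticF (R : realType) (x : R) : R := 1 / (1 + expR (- x)).

(* Data D : 'I_n -> 'I_n -> 'I_2 -> R.  The paper's index k = 1 ("i is worse
   than j") is the ordinal 0 : 'I_2, and k = 2 ("i is better than j") is the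
   ordinal 1 : 'I_2. *)
Definition k1 : 'I_2 := ord0.
Definition k2 : 'I_2 := ord_max.

Definition hratio (R : realType) (n : nat) (D : 'I_n -> 'I_n -> 'I_2 -> R)
  (i j : 'I_n) : R := D i j k2 / D i j k1.

Definition cycle_prod (R : realType) (n : nat) (h : 'I_n -> 'I_n -> R)
  (s : seq 'I_n) : R :=
  match s with
  | [::] => 1
  | x :: p => \prod_(e <- zip (x :: p) (rcons p x)) h e.1 e.2
  end.

From HB Require Import structures.
From mathcomp Require Import all_boot all_order all_algebra.
From mathcomp Require Import reals.
From mathcomp Require Import sequences exp.
From mathcomp Require Import ring.
Set Implicit Arguments.
Unset Strict Implicit.
Unset Printing Implicit Defensive.
Import Order.TTheory GRing.Theory Num.Theory.
Local Open Scope ring_scope.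

(* If all cycle products of h are 1, then h is the quotient g i / g j of a
   potential g, obtained by multiplying h along a fixed walk from each vertex
   to the root.  Taking m := ln g, the logistic odds F(m_i - m_j)/F(m_j - m_i)
   equal exp(m_i - m_j) = g i / g j.  Conversely such a quotient telescopes to
   1 along every closed walk. *)

Definition walk_prod (R : comNzRingType) (T : Type) (h : T -> T -> R)
  (x : T) (p : seq T) : R :=
  \prod_(e <- zip (x :: p) p) h e.1 e.2.

Section WalkProd.
Variables (R : comNzRingType) (T : Type) (h : T -> T -> R).

Lemma walk_prod_nil x : walk_prod h x [::] = 1.
Proof. by rewrite /walk_prod big_nil. Qed.

Lemma walk_prod_cons x y p : walk_prod h x (y :: p) = h x y * walk_prod h y p.
Proof. by rewrite /walk_prod big_cons. Qed.

Lemma walk_prod_cat x p q :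
  walk_prod h x (p ++ q) = walk_prod h x p * walk_prod h (last x p) q.
Proof.
elim: p x => [|y p IHp] x /=; first by rewrite walk_prod_nil mul1r.
by rewrite !walk_prod_cons IHp mulrA.
Qed.

End WalkProd.

Lemma walk_prod_gt0 (R : numDomainType) (T : Type) (e : rel T)
    (h : T -> T -> R) x p :
  (forall x y, e x y -> 0 < h x y) -> path e x p -> 0 < walk_prod h x p.
Proof.
move=> h_gt0; elim: p x => [|y p IHp] x /=; first by rewrite walk_prod_nil.
by case/andP=> exy pth; rewrite walk_prod_cons mulr_gt0 ?h_gt0 ?IHp.
Qed.

Lemma walk_prod_telescope (F : fieldType) (T : Type) (e : rel T)
    (h : T -> T -> F) (g : T -> F) x p :
  (forall y, g y != 0) -> (forall y z, e y z -> h y z = g y / g z) ->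
  path e x p -> walk_prod h x p = g x / g (last x p).
Proof.
move=> g_neq0 h_quot; elim: p x => [|y p IHp] x /=.
  by rewrite walk_prod_nil divff.
case/andP=> exy pth; rewrite walk_prod_cons IHp // h_quot //.
by rewrite mulrA divfK.
Qed.

Lemma cycle_prodE (R : realType) (n : nat) (h : 'I_n -> 'I_n -> R) x p :
  cycle_prod h (x :: p) = walk_prod h x (rcons p x).
Proof.
rewrite /cycle_prod /walk_prod; congr (\prod_(e <- _) _).
by elim: p {1 3}x => //= y p IHp z; rewrite IHp.
Qed.

Lemma cycle_prod_closed_walkP (R : realType) (n : nat) (e : rel 'I_n)
    (h : 'I_n -> 'I_n -> R) :
  (forall s, s != [::] -> cycle e s -> cycle_prod h s = 1) <->
  (forall x p, path e x p -> last x p = x -> walk_prod h x p = 1).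
Proof.
split=> [h_cycle x p | h_closed [//|x p] _ pth].
  case/lastP: p => [|p y] pth; first by rewrite walk_prod_nil.
  rewrite last_rcons => y_x; rewrite y_x in pth *.
  by rewrite -cycle_prodE h_cycle.
by rewrite cycle_prodE h_closed ?last_rcons.
Qed.

Section Potential.
Variables (F : fieldType) (T : finType) (e : rel T) (h : T -> T -> F) (r : T).
Hypothesis e_connected : forall x y, connect e x y.
Hypothesis closed_walk_prod :
  forall x p, path e x p -> last x p = x -> walk_prod h x p = 1.

Lemma connect_walk x y : exists p, path e x p && (last x p == y).
Proof.
by case/connectP: (e_connected x y) => p pth ->; exists p; rewrite pth eqxx.
Qed.

Definition walk_to_root x : seq T := xchoose (connect_walk x r).

Definition potential x : F := walk_prod h x (walk_to_root x).

Lemma walk_to_rootP x :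
  path e x (walk_to_root x) /\ last x (walk_to_root x) = r.
Proof. by case/andP: (xchooseP (connect_walk x r)) => pth /eqP. Qed.

Lemma potential_root : potential r = 1.
Proof. by have [pth lst] := walk_to_rootP r; apply: closed_walk_prod. Qed.

Lemma potential_edge x y : e x y -> h x y * potential y = potential x.
Proof.
move=> exy; have [pth_x lst_x] := walk_to_rootP x.
have [pth_y lst_y] := walk_to_rootP y.
have /andP[pth_back /eqP lst_back] := xchooseP (connect_walk r x).
set back := xchoose _ in pth_back lst_back.
(* Close the walks x -> root and x -> y -> root by the same walk back to x. *)
have via_x : potential x * walk_prod h r back = 1.
  rewrite -lst_x -walk_prod_cat closed_walk_prod ?cat_path ?pth_x //=.
    by rewrite lst_x pth_back.
  by rewrite last_cat lst_x.
have via_y : h x y * potential y * walk_prod h r back = 1.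
  rewrite -lst_y -mulrA -walk_prod_cat -walk_prod_cons closed_walk_prod //=.
    by rewrite exy cat_path pth_y lst_y pth_back.
  by rewrite last_cat lst_y.
have back_neq0 : walk_prod h r back != 0.
  by apply: contra_eq_neq via_x => ->; rewrite mulr0 eq_sym oner_neq0.
by apply: (mulIf back_neq0); rewrite via_x via_y.
Qed.

End Potential.

Lemma logisticF_odds (R : realType) (x : R) :
  logisticF x / logisticF (- x) = expR x.
Proof.
have ex_gt0 := expR_gt0 x.
rewrite /logisticF opprK expRN; field.
by rewrite !gt_eqF ?addr_gt0 ?invr_gt0.
Qed.

Theorem theorem2 (R : realType) (n : nat) (hn : (2 <= n)%N)
  (D : 'I_n -> 'I_n -> 'I_2 -> R) (I : rel 'I_n)
  (D_nonneg : forall i j k, 0 <= D i j k)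
  (D_sym : forall i j, D i j k1 = D j i k2)
  (I_irr : forall i j, I i j -> i != j)
  (I_sym : forall i j, I i j = I j i)
  (I_pos : forall i j, I i j -> 0 < D i j k1 /\ 0 < D i j k2)
  (G_conn : forall i j, connect I i j) :
  (forall s : seq 'I_n, s != [::] -> cycle I s ->
      cycle_prod (hratio D) s = 1)
  <->
  (exists m : 'I_n -> R, (forall i : 'I_n, nat_of_ord i = 0%N -> m i = 0) /\
     forall i j, I i j ->
       D i j k2 / D i j k1 = logisticF (m i - m j) / logisticF (m j - m i)).
Proof.
have odds_opp (x y : R) : logisticF (x - y) / logisticF (y - x) = expR (x - y).
  by rewrite -[y - x]opprB logisticF_odds.
split=> [/cycle_prod_closed_walkP closed_h | [m [_ odds_m]]].
- pose root : 'I_n := Ordinal (ltnW hn).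
  pose g := potential (hratio D) root G_conn.
  have h_gt0 i j : I i j -> 0 < hratio D i j.
    by case/I_pos=> D1_gt0 D2_gt0; rewrite divr_gt0.
  have g_gt0 i : 0 < g i.
    exact: walk_prod_gt0 h_gt0 (walk_to_rootP _ _ _).1.
  exists (fun i => ln (g i)); split=> [i i_0 | i j Iij].
    have -> : i = root by apply: val_inj.
    by rewrite /g (potential_root _ _ closed_h) ln1.
  rewrite odds_opp expRB !lnK ?posrE //.
  by rewrite /g -(potential_edge _ _ closed_h Iij) mulfK ?gt_eqF.
- apply/cycle_prod_closed_walkP => x p pth closed_p.
  have expm_neq0 y : expR (m y) != 0 by rewrite gt_eqF ?expR_gt0.
  have h_quot y z : I y z -> hratio D y z = expR (m y) / expR (m z).
    by move=> Iyz; rewrite /hratio odds_m // odds_opp expRB.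
  rewrite (walk_prod_telescope expm_neq0 h_quot pth) closed_p.
  by rewrite divff ?expm_neq0.
Qed.
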